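(* Let $G=(V,E)$ be a bi-connected embedded planar graph, $T$ a spanning tree of $G$, and $w_V:V\to\mathbb{R}_{\ge0}$ a vertex-weight assignment with $w_V(x)\le\frac{1}{12}w_V(G)$ for every vertex $x$. Transfer weights to faces as follows: each vertex transfers its weight to one arbitrary face containing it, and $w_F(f)$ is the total weight of vertices that transferred to $f$. Let $T^*$ be the cotree of $T$ (a spanning tree of the dual graph $G^*$), rooted at an arbitrary node, with node weights $w_F$. Then: (1) If $T^*$ has a $(\frac14,\frac34)$-balanced node $f$ with respect to $w_F$, let $u,v$ be the endpoints of the primal edge $e$ dual to the tree edge $(f,\mathsf{parent}(f))$ of $T^*$. Then the $u$-to-$v$ path $P$ in $T$ is a $\frac34$-balanced separator of $G$ with respect to $w_V$, and $P\cup\{e\}=C(T,e)$. (2) Otherwise, $T^*$ has a $(\frac14,\frac34)$-critical node $f$ with respect to $w_F$, and there are two vertices $u,v$ on the face $f$ such that the $u$-to-$v$ path $P$ in $T$ is a $\frac34$-balanced separator of $G$ with respect to $w_V$; moreover, adding the edge $e=(u,v)$ to $G$ (drawn inside $f$) does not violate planarity, and $P\cup\{e\}=C(T,e)$.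
   Context: The dual $G^*$ of an embedded planar graph $G$ has a node for each face of $G$ and, for each edge $e$ of $G$, an edge $e^*$ between the nodes of the two faces on either side of $e$ (a self-loop if they coincide). For a spanning tree $T$ of $G$, the cotree $T^*$ is the set of edges dual to $E\setminus T$; it is a spanning tree of $G^*$. $C(T,e)$ for $e\notin T$ denotes the fundamental cycle: the unique cycle in $T\cup\{e\}$. $w_V(G)$ is the total vertex weight. For a rooted tree $T^*$ with node weights, $T^*_f$ is the subtree rooted at $f$, $w(T^*_f)$ its total node weight, and $w(T^* )$ the total weight. A node $f$ is $(\alpha,\beta)$-balanced if $\alpha w(T^* )\le w(T^*_f)\le\beta w(T^* )$; it is $(\alpha,\beta)$-critical if $w(T^*_f)>\beta w(T^* )$ and $w(T^*_h)<\alpha w(T^* )$ for every child $h$ of $f$. A set $S$ of vertices is a $c$-balanced separator (w.r.t. $w_V$) if each connected component of $G\setminus S$ has total weight at most $c\cdot w_V(G)$. *)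

(* Embedded planar graphs are represented as combinatorial
   maps (rotation systems) on a finite type of darts. *)
From mathcomp Require Import all_boot all_order all_algebra.
Set Implicit Arguments. Unset Strict Implicit. Unset Printing Implicit Defensive.
Import Order.TTheory GRing.Theory Num.Theory.

Definition avoid (A : finType) (r : rel A) (S : {set A}) : rel A :=
  fun x y => [&& x \notin S, y \notin S & r x y].

Definition connected_rel (A : finType) (r : rel A) : Prop :=
  forall x y, connect r x y.

Definition biconnected_rel (A : finType) (r : rel A) : Prop :=
  connected_rel r /\
  forall z x y, x != z -> y != z -> connect (avoid r [set z]) x y.

Definition simple_path (A : finType) (r : rel A) (u : A) (p : seq A) (v : A) : bool :=
  [&& path r u p, last u p == v & uniq (u :: p)].

Definition balanced_separator (R : numDomainType) (A : finType) (r : rel A)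
    (w : A -> R) (c : R) (S : {set A}) : Prop :=
  forall x, x \notin S ->
    (\sum_(y | (y \notin S) && connect (avoid r S) x y) w y <= c * \sum_y w y)%R.

Section Map.
Variables (D V F : finType).
(* e : edge involution on darts, n : rotation (successor around a vertex),
   faces are the orbits of the face permutation  x |-> n (e x). *)
Variables (e n : D -> D) (vert : D -> V) (fc : D -> F).

Definition face_perm (x : D) : D := n (e x).

Definition is_planar_map : Prop :=
  [/\ injective n,
      (forall x, e (e x) = x) /\ (forall x, e x != x),
      (forall x y, (vert x == vert y) = fconnect n x y) /\ (forall v, exists x, vert x = v),
      (forall x y, (fc x == fc y) = fconnect face_perm x y) /\ (forall f, exists x, fc x = f)
    & (* Euler's formula: genus 0 *)
      (#|V| + #|F| = #|D| %/ 2 + 2)%N ].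

Definition adjE (T : {set D}) : rel V :=
  fun x y => [exists d in T, (vert d == x) && (vert (e d) == y)].

Definition adjG : rel V := adjE [set: D].

(* T (a set of darts closed under e) is a spanning tree: connected and
   acyclic, acyclicity expressed as "every tree edge is a bridge of T". *)
Definition spanning_tree (T : {set D}) : Prop :=
  [/\ forall d, (e d \in T) = (d \in T),
      connected_rel (adjE T)
    & forall d, d \in T ->
        ~~ connect (adjE (T :\ d :\ e d)) (vert d) (vert (e d))].

Definition adj_cotree (T : {set D}) : rel F :=
  fun g h => [exists d, [&& d \notin T, fc d == g & fc (e d) == h]].

(* T^*_f, for T^* rooted at rt : the nodes g whose path to the root
   passes through f (every walk from g to rt in T^* visits f). *)
Definition in_subtree (T : {set D}) (rt f g : F) : bool :=
  (g == f) || ~~ connect (avoid (adj_cotree T) [set f]) g rt.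

Definition child (T : {set D}) (rt f h : F) : bool :=
  [&& adj_cotree T f h, in_subtree T rt f h & h != f].

(* a dart of the primal edge dual to the tree edge (f, parent f) *)
Definition parent_dart (T : {set D}) (rt f : F) (d : D) : bool :=
  [&& d \notin T, fc d == f & ~~ in_subtree T rt f (fc (e d))].

Variable R : realFieldType.

Definition wF (wV : V -> R) (tf : V -> F) (g : F) : R :=
  \sum_(x | tf x == g) wV x.

Definition wsub (T : {set D}) (rt : F) (w : F -> R) (f : F) : R :=
  \sum_(g | in_subtree T rt f g) w g.

Definition balanced_node (T : {set D}) (rt : F) (w : F -> R) (a b : R) (f : F) : Prop :=
  (a * \sum_g w g <= wsub T rt w f)%R /\ (wsub T rt w f <= b * \sum_g w g)%R.

Definition critical_node (T : {set D}) (rt : F) (w : F -> R) (a b : R) (f : F) : Prop :=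
  (b * \sum_g w g < wsub T rt w f)%R /\
  forall h, child T rt f h -> (wsub T rt w h < a * \sum_g w g)%R.

End Map.

(* Label every dart by a boolean.  If the label can change across a non-tree
   edge or across a face corner only at darts based at [u] or [v], counting the
   changes around each vertex modulo 2 shows that every tree edge across which
   the label changes separates [u] from [v] in [T], hence lies on the tree path
   [P] from [u] to [v].  Off [P] the label is then constant on the darts of a
   vertex and along each component of [G - P], so every component weighs at
   most as much as the vertices carrying one of the two labels.

   At a balanced node [f] the label "the face lies in T*_f" changes only across
   the parent edge.  At a critical node [f], walk around the boundary of [f]
   and label by "the face is among the first [j] corners of [f] or in a cotree
   branch leaving them", with [j] maximal such that this side weighs at most
   3/4; the next branch weighs less than 1/4 by criticality, which bounds the
   other side by 3/4 as well.

   The same parity count with [u = v] shows that the cotree is connected, and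
   Euler's formula then makes it a tree. *)

From mathcomp Require Import all_boot all_order all_algebra zify.
From mathcomp.algebra_tactics Require Import lra.
Import Order.TTheory GRing.Theory Num.Theory.
Set Implicit Arguments. Unset Strict Implicit. Unset Printing Implicit Defensive.

Section Avoid.
Variables (A : finType) (r : rel A).

Lemma avoid_subrel (S : {set A}) : subrel (avoid r S) r.
Proof. by move=> x y /and3P []. Qed.

Lemma connect_avoid_subset (S S' : {set A}) x y :
  S \subset S' -> connect (avoid r S') x y -> connect (avoid r S) x y.
Proof.
move=> sSS'; apply: connect_sub => a b /and3P [aS' bS' rab]; apply: connect1.
by rewrite /avoid rab !(contra (subsetP sSS' _)).
Qed.

Lemma connect_avoid_subrel (r' : rel A) (S : {set A}) x y :
  subrel r r' -> connect (avoid r S) x y -> connect (avoid r' S) x y.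
Proof.
move=> rr'; apply: connect_sub => a b /and3P [aS bS rab]; apply: connect1.
by rewrite /avoid aS bS rr'.
Qed.

Lemma connect_avoid_src (S : {set A}) x y :
  connect (avoid r S) x y -> x \in S -> x = y.
Proof.
case/connectP=> [[|z p]] /=; first by move=> _ ->.
by case/andP=> /and3P [/negP xS _ _].
Qed.

Lemma connect_avoid_dst (S : {set A}) x y :
  connect (avoid r S) x y -> y \in S -> x = y.
Proof.
case/connectP=> p + ->; elim: p x => [|z p IH] x //= /andP [/and3P [_ zS _] pth] lS.
by have zl := IH z pth lS; rewrite zl lS in zS.
Qed.

Lemma avoid_connect_sym (S : {set A}) : symmetric r -> connect_sym (avoid r S).
Proof. by move=> sr; apply: sym_connect_sym => a b; rewrite /avoid sr andbCA. Qed.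

Lemma connect_avoid_exit (S : {set A}) x y :
  connect r x y -> y \notin S ->
  connect (avoid r S) x y \/
  exists s z, [/\ s \in S, r s z, z \notin S & connect (avoid r S) z y].
Proof.
case/connectP=> p pth ->; elim: p x pth => [|z p IH] x /=.
  by move=> _ _; left; exact: connect0.
case/andP=> rxz pth lS; case: (IH z pth lS) => [czl|]; last by right.
have zS : z \notin S.
  by apply: contra lS => zS; rewrite -(connect_avoid_src czl zS).
case xS: (x \in S); first by right; exists x, z.
left; apply: connect_trans czl; apply: connect1.
by rewrite /avoid xS zS rxz.
Qed.

End Avoid.

Notation "\xor_ ( i | P ) F" := (\big[addb/false]_(i | P) F)
  (at level 41, F at level 41, i at level 50).

Section BigXor.
Variable I : finType.

Lemma big_addb_involution (P : pred I) (g : I -> bool) (f : I -> I) :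
  involutive f -> (forall i, f i != i) -> (forall i, P (f i) = P i) ->
  (forall i, g (f i) = g i) -> \xor_(i | P i) g i = false.
Proof.
move=> fK fn Pf gf; pose r (i : I) : nat := enum_rank i.
have rf i : r (f i) != r i.
  by apply: contra (fn i) => /eqP/val_inj/enum_rank_inj ->.
rewrite (bigID (fun i => r i < r (f i))) /= [X in _ (+) X](reindex_inj (inv_inj fK)) /=.
rewrite [X in _ (+) X](eq_big (fun i => P i && (r i < r (f i))) g) ?addbb //.
move=> i; rewrite Pf fK; congr andb.
by rewrite -leqNgt leq_eqVlt eq_sym (negbTE (rf i)).
Qed.

Lemma big_addb_true (P : pred I) : \xor_(i | P i) true = odd #|P|.
Proof. by rewrite big_const; elim: #|P| => //= k ->. Qed.

Lemma big_addb_andl (P : pred I) (g : I -> bool) :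
  \xor_(i | P i) g i = \xor_(i | true) (P i && g i).
Proof. by rewrite big_mkcond; apply: eq_bigr => i _; case: (P i). Qed.

Lemma big_addb_pred1 (a : I) (c : bool) : \xor_(i | true) ((i == a) && c) = c.
Proof. by rewrite (bigD1 a) //= eqxx big1 ?addbF // => i /negbTE ->. Qed.

Lemma big_addb_pred2 (a b : I) (ca cb : bool) : a != b ->
  \xor_(i | true) (((i == a) && ca) || ((i == b) && cb)) = ca (+) cb.
Proof.
move=> ab.
have -> : ca (+) cb = \xor_(i | true) ((i == a) && ca) (+) \xor_(i | true) ((i == b) && cb).
  by rewrite !big_addb_pred1.
rewrite -big_split.
apply: eq_bigr => i _; case: (eqVneq i a) => [->|_]; last by case: (i == b) cb => [] [].
by rewrite (negbTE ab) /=; case: ca.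
Qed.

End BigXor.

Local Open Scope ring_scope.

Section NonnegSums.
Variables (R : numDomainType) (I : finType) (w : I -> R).
Hypothesis w_ge0 : forall i, 0 <= w i.

Lemma ler_sum_subpred (P Q : pred I) :
  (forall i, P i -> Q i) -> \sum_(i | P i) w i <= \sum_(i | Q i) w i.
Proof.
move=> PQ; rewrite [X in _ <= X](bigID P) /=.
by rewrite (eq_bigl P) ?lerDl ?sumr_ge0 // => i; apply: andb_idl (PQ i).
Qed.

Lemma ler_sum_predU (P Q1 Q2 : pred I) :
  (forall i, P i -> Q1 i || Q2 i) ->
  \sum_(i | P i) w i <= \sum_(i | Q1 i) w i + \sum_(i | Q2 i) w i.
Proof.
move=> PQ; apply: le_trans (ler_sum_subpred PQ) _.
rewrite (bigID Q1) /=; apply: lerD; apply: ler_sum_subpred => i /andP [] //.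
by case/orP=> -> //= /negP.
Qed.

End NonnegSums.

Lemma sumr_predC (R : zmodType) (I : finType) (P : pred I) (w : I -> R) :
  \sum_(i | ~~ P i) w i = \sum_i w i - \sum_(i | P i) w i.
Proof. by rewrite [X in _ = X - _](bigID P) /= addrC addrK. Qed.

Lemma card_imset_glue (T T' : finType) (f : T -> T') (S : {set T}) a b :
  a \in S -> b \in S -> a != b -> f a = f b -> {in S :\ b &, injective f} ->
  #|f @: S| = #|S|.-1.
Proof.
move=> aS bS ab fab finj.
have -> : f @: S = f @: (S :\ b).
  apply/setP => y; apply/imsetP/imsetP => [[x xS ->]|[x /setD1P [_ xS] ->]];
    last by exists x.
  case: (eqVneq x b) => [->|xb]; first by exists a; rewrite // !inE ab.
  by exists x; rewrite // !inE xb.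
by rewrite card_in_imset // (cardsD1 b S) bS.
Qed.

Section Components.
Variables (W D : finType) (e : D -> D) (h : D -> W).
Hypothesis eK : involutive e.

Definition e_closed (M : {set D}) := forall d, (e d \in M) = (d \in M).
Definition component (M : {set D}) (x : W) : {set W} := [set z | connect (adjE e h M) x z].
Definition n_components (M : {set D}) := #|[set component M x | x : W]|.

Lemma adjE_sym (M : {set D}) : e_closed M -> symmetric (adjE e h M).
Proof.
move=> cM a b; apply/existsP/existsP => [] [y /and3P [yM /eqP <- /eqP <-]];
  by exists (e y); rewrite cM yM eK !eqxx.
Qed.

Lemma adjE_connect_sym (M : {set D}) : e_closed M -> connect_sym (adjE e h M).
Proof. by move=> cM; apply: sym_connect_sym; apply: adjE_sym. Qed.

Lemma adjE_subset (M M' : {set D}) : M \subset M' -> subrel (adjE e h M) (adjE e h M').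
Proof.
move=> sMM' a b /existsP [y /andP [yM hy]]; apply/existsP; exists y.
by rewrite (subsetP sMM' _ yM).
Qed.

Lemma adjE_dart (M : {set D}) y : y \in M -> adjE e h M (h y) (h (e y)).
Proof. by move=> yM; apply/existsP; exists y; rewrite yM !eqxx. Qed.

Lemma component_eq (M : {set D}) x z :
  e_closed M -> connect (adjE e h M) x z -> component M x = component M z.
Proof.
move=> cM cxz; apply/setP => w; rewrite !inE; apply/idP/idP => c.
  by apply: connect_trans c; rewrite adjE_connect_sym.
exact: connect_trans c.
Qed.

Lemma e_closed_remove (M : {set D}) y : e_closed M -> e_closed (M :\ y :\ e y).
Proof.
move=> cM z; rewrite !inE cM !(inv_eq eK) eK.
by case: (z == y); case: (z == e y).
Qed.

Section RemoveEdge.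
Variables (M : {set D}) (y : D).
Hypotheses (cM : e_closed M) (yM : y \in M).
Local Notation M' := (M :\ y :\ e y).
Local Notation c' := (connect (adjE e h M')).
Let a := h y.
Let b := h (e y).

Lemma connect_remove_edge x z :
  connect (adjE e h M) x z = [|| c' x z, c' x a && c' b z | c' x b && c' a z].
Proof.
apply/idP/idP; last first.
  have sM'M : M' \subset M by apply/subsetP => w; rewrite !inE => /and3P [].
  have sub := connect_sub (fun u v (huv : adjE e h M' u v) =>
     connect1 (adjE_subset sM'M huv)).
  have cab : connect (adjE e h M) a b by apply/connect1/adjE_dart.
  have cba : connect (adjE e h M) b a.
    by apply: connect1; have := @adjE_dart M (e y); rewrite eK cM; apply.
  case/or3P => [/sub //|/andP [/sub h1 /sub h2]|/andP [/sub h1 /sub h2]].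
    exact: connect_trans h1 (connect_trans cab h2).
  exact: connect_trans h1 (connect_trans cba h2).
case/connectP => p pth ->; elim: p x pth => [|w p IH] x /=.
  by rewrite connect0.
case/andP => /existsP [d /and3P [dM /eqP hd /eqP hed]] pth.
have := IH _ pth; set l := last w p.
case dM': (d \in M').
  have cxw : c' x w by rewrite -hd -hed; apply/connect1/adjE_dart.
  case/or3P => [h1|/andP [h1 h2]|/andP [h1 h2]].
  - by rewrite (connect_trans cxw h1).
  - by rewrite (connect_trans cxw h1) h2 orbT.
  - by rewrite (connect_trans cxw h1) h2 !orbT.
move/negbT: dM'; rewrite !inE dM andbT negb_and !negbK => /orP [/eqP de|/eqP dy].
  have [-> ->] : x = b /\ w = a by rewrite -hd -hed de eK.
  by rewrite !connect0 /=; case/or3P => [->|->|/andP [_ ->]]; rewrite ?orbT.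
have [-> ->] : x = a /\ w = b by rewrite -hd -hed dy.
by rewrite !connect0 /=; case/or3P => [->|/andP [_ ->]|->]; rewrite ?orbT.
Qed.

Lemma n_components_remove_cycle_edge : c' a b -> n_components M' = n_components M.
Proof.
move=> cab; have cba : c' b a by rewrite adjE_connect_sym //; apply: e_closed_remove.
have E x z : connect (adjE e h M) x z = c' x z.
  rewrite connect_remove_edge; apply/idP/idP => [|-> //].
  case/or3P => [//|/andP [h1 h2]|/andP [h1 h2]].
    exact: connect_trans h1 (connect_trans cab h2).
  exact: connect_trans h1 (connect_trans cba h2).
rewrite /n_components.
suff -> : [set component M' x | x : W] = [set component M x | x : W] by [].
by apply: eq_imset => x; apply/setP => z; rewrite !inE E.
Qed.

Let glue (K : {set W}) :=
  if (a \in K) || (b \in K) then component M' a :|: component M' b else K.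

Lemma component_remove_edge x : component M x = glue (component M' x).
Proof.
have csym := adjE_connect_sym (e_closed_remove y cM).
apply/setP => z; rewrite /glue !inE connect_remove_edge.
case: (boolP (c' x a)) => xa /=; rewrite ?inE.
  have ax : c' a x by rewrite csym.
  apply/idP/idP.
    by case/or3P => [xz|->|/andP [_ ->]]; rewrite ?orbT ?(connect_trans ax xz).
  by case/orP => [az|->]; rewrite ?orbT // (connect_trans xa az).
case: (boolP (c' x b)) => xb /=; rewrite ?inE ?andbF ?orbF //.
have bx : c' b x by rewrite csym.
apply/idP/idP.
  by case/orP => [xz|->]; rewrite ?(connect_trans bx xz) ?orbT.
by case/orP => [->|bz]; rewrite ?orbT // (connect_trans xb bz).
Qed.

Lemma n_components_remove_bridge :
  ~~ c' a b -> n_components M' = (n_components M).+1.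
Proof.
move=> nab; have cM' := e_closed_remove y cM.
set S := [set component M' x | x : W].
have -> : n_components M = #|glue @: S|.
  rewrite /n_components -imset_comp.
  suff -> : [set component M x | x : W] = [set (glue \o component M') x | x : W] by [].
  by apply: eq_imset => x /=; rewrite component_remove_edge.
have mem_comp x : x \in component M' x by rewrite inE connect0.
have ab : component M' a != component M' b.
  by apply: contra nab => /eqP ab; have := mem_comp b; rewrite -ab inE.
have bS : component M' b \in S by apply: imset_f.
rewrite /n_components -/S.
rewrite (card_imset_glue (a := component M' a) (b := component M' b)) ?imset_f //.
- by rewrite (cardsD1 (component M' b) S) bS.
- by rewrite /glue !mem_comp ?orbT.
move=> K1 K2 /setD1P [K1b /imsetP [x1 _ def1]] /setD1P [K2b /imsetP [x2 _ def2]].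
subst K1 K2.
have glued x : component M' x != component M' b ->
    (a \in component M' x) || (b \in component M' x) -> component M' x = component M' a.
  move=> xb /orP [ax|bx]; first by rewrite inE in ax; apply: component_eq.
  by rewrite inE in bx; rewrite (component_eq cM' bx) eqxx in xb.
rewrite /glue; case: ifP => h1; case: ifP => h2.
- by rewrite (glued _ K1b h1) (glued _ K2b h2).
- by move=> e1; move/negbT: h2; rewrite -e1 !inE !connect0 orbT.
- by move=> e1; move/negbT: h1; rewrite e1 !inE !connect0 orbT.
- done.
Qed.

End RemoveEdge.
Hypothesis e_neq : forall d, e d != d.

Lemma card_remove_edge (M : {set D}) y :
  e_closed M -> y \in M -> #|M| = (#|M :\ y :\ e y|).+2.
Proof.
move=> cM yM; rewrite (cardsD1 y M) yM (cardsD1 (e y) (M :\ y)).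
by rewrite !inE cM yM e_neq.
Qed.

Lemma n_components0 : n_components set0 = #|W|.
Proof.
rewrite /n_components card_imset // => x z /setP /(_ z); rewrite !inE connect0.
case/connectP => [[|w p]] /=; first by move=> _ ->.
by case/andP => /existsP [d]; rewrite inE.
Qed.

Lemma n_components_lower_bound (M : {set D}) :
  e_closed M -> (#|W| * 2 <= n_components M * 2 + #|M|)%N.
Proof.
move: {2}#|M| (leqnn #|M|) => m; elim: m M => [|m IH] M.
  by rewrite leqn0 => /eqP /cards0_eq -> _; rewrite n_components0 cards0 addn0.
move=> sM cM; have [->|[y yM]] := set_0Vmem M.
  by rewrite n_components0 cards0 addn0.
have cardM := card_remove_edge cM yM.
have sM' : (#|M :\ y :\ e y| <= m)%N by move: sM; rewrite cardM; lia.
have := IH _ sM' (e_closed_remove y cM); rewrite cardM.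
case: (boolP (connect (adjE e h (M :\ y :\ e y)) (h y) (h (e y)))) => c.
  by rewrite (n_components_remove_cycle_edge cM yM c); lia.
by rewrite (n_components_remove_bridge cM yM c); lia.
Qed.

Lemma n_components_forest (M : {set D}) : e_closed M ->
  (forall y, y \in M -> ~~ connect (adjE e h (M :\ y :\ e y)) (h y) (h (e y))) ->
  (#|W| * 2 = n_components M * 2 + #|M|)%N.
Proof.
move: {2}#|M| (leqnn #|M|) => m; elim: m M => [|m IH] M.
  by rewrite leqn0 => /eqP /cards0_eq -> _ _; rewrite n_components0 cards0 addn0.
move=> sM cM bridges; have [->|[y yM]] := set_0Vmem M.
  by rewrite n_components0 cards0 addn0.
have cardM := card_remove_edge cM yM.
have sM' : (#|M :\ y :\ e y| <= m)%N by move: sM; rewrite cardM; lia.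
rewrite cardM (IH _ sM' (e_closed_remove y cM)).
  by rewrite (n_components_remove_bridge cM yM (bridges y yM)); lia.
move=> z zM'; have zM : z \in M by move: zM'; rewrite !inE => /and3P [].
apply: contra (bridges z zM); apply: connect_sub => u v huv; apply: connect1.
by apply: adjE_subset huv; apply/subsetP => w; rewrite !inE => /and5P [-> -> _ _ ->].
Qed.

Lemma n_components_connected (M : {set D}) (w0 : W) :
  connected_rel (adjE e h M) -> n_components M = 1%N.
Proof.
move=> conn; rewrite /n_components -(cards1 [set: W]).
suff -> : [set component M x | x : W] = [set [set: W]] by [].
apply/setP => K; rewrite inE; apply/imsetP/eqP => [[x _ ->]|->].
  by apply/setP => z; rewrite !inE conn.
by exists w0 => //; apply/setP => z; rewrite !inE conn.
Qed.

End Components.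

Section PlanarMap.
Variables (D V F : finType) (e n : D -> D) (vert : D -> V) (fc : D -> F).
Hypothesis pm : is_planar_map e n vert fc.

Local Notation phi := (face_perm e n).

Lemma rot_inj : injective n. Proof. by case: pm. Qed.
Lemma edgeK : involutive e. Proof. by case: pm => _ []. Qed.
Lemma edge_neq d : e d != d. Proof. by case: pm => _ [_]. Qed.
Lemma eq_vert x y : (vert x == vert y) = fconnect n x y. Proof. by case: pm => _ _ []. Qed.
Lemma vert_surj v : exists x, vert x = v. Proof. by case: pm => _ _ [_]. Qed.
Lemma eq_fc x y : (fc x == fc y) = fconnect phi x y. Proof. by case: pm => _ _ _ []. Qed.
Lemma fc_surj f : exists x, fc x = f. Proof. by case: pm => _ _ _ [_]. Qed.
Lemma euler_formula : (#|V| + #|F| = #|D| %/ 2 + 2)%N. Proof. by case: pm. Qed.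

Lemma edge_inj : injective e. Proof. exact: inv_inj edgeK. Qed.
Lemma face_perm_inj : injective phi. Proof. by move=> x y /rot_inj /edge_inj. Qed.

Lemma vert_rot d : vert (n d) = vert d.
Proof. by apply/eqP; rewrite eq_sym eq_vert; apply: fconnect1. Qed.

Lemma fc_face_perm d : fc (phi d) = fc d.
Proof. by apply/eqP; rewrite eq_sym eq_fc; apply: fconnect1. Qed.

Lemma face_perm_edge d : phi (e d) = n d.
Proof. by rewrite /face_perm edgeK. Qed.

Lemma vert_face_perm d : vert (phi d) = vert (e d).
Proof. exact: vert_rot. Qed.

Lemma fc_iter_face_perm i d : fc (iter i phi d) = fc d.
Proof. by elim: i => //= i IH; rewrite fc_face_perm. Qed.

Lemma card_darts_even : odd #|D| = false.
Proof.
rewrite -(big_addb_true (fun _ : D => true)).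
by apply: (big_addb_involution edgeK edge_neq).
Qed.

Lemma vert_rot_invariant (s : D -> bool) y y' :
  (forall z, vert z = vert y -> s (n z) = s z) -> vert y' = vert y -> s y' = s y.
Proof.
move=> sn /eqP; rewrite eq_sym eq_vert => /connectP [p pth ->].
elim: p y pth sn => [|z p IH] y //= /andP [/eqP <-] pth sn.
by rewrite (IH (n y) pth) ?sn // => z' hz; apply: sn; rewrite hz vert_rot.
Qed.

(* The rotation step [y -> n y] is the edge step [y -> e y] followed by the
   corner step [e y -> phi (e y) = n y], and once around a vertex a label
   changes an even number of times. *)
Lemma vertex_parity (s : D -> bool) x :
  \xor_(y | vert y == x) (s y != s (e y)) =
  \xor_(z | vert (phi z) == x) (s z != s (phi z)).
Proof.
rewrite [RHS](reindex_inj edge_inj) /=.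
rewrite [RHS](eq_big (fun y => vert y == x) (fun y => s (e y) != s (n y))); first last.
- by move=> y _; rewrite face_perm_edge.
- by move=> y; rewrite face_perm_edge vert_rot.
apply/eqP; rewrite -negb_add; apply/negbT; rewrite -big_split /=.
rewrite (eq_bigr (fun y => s y (+) s (n y))); last first.
  by move=> y _; case: (s y) (s (e y)) (s (n y)) => [] [] [].
rewrite big_split /= [X in X (+) _](reindex_inj rot_inj) /=.
by rewrite (eq_bigl (fun y => vert y == x)) ?addbb // => y; rewrite vert_rot.
Qed.

Section Separation.
Variables (T : {set D}) (s : D -> bool) (u v : V).
Hypothesis T_closed : e_closed e T.
Hypothesis T_bridge : forall d, d \in T ->
  ~~ connect (adjE e vert (T :\ d :\ e d)) (vert d) (vert (e d)).
Hypothesis label_parity : forall x,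
  \xor_(y | (vert y == x) && (y \notin T)) (s y != s (e y)) (+)
  \xor_(z | vert (phi z) == x) (s z != s (phi z)) = (x == u) (+) (x == v).

Local Notation tree_side t := (connect (adjE e vert (T :\ t :\ e t)) (vert t)).

Lemma tree_parity x :
  \xor_(y | (vert y == x) && (y \in T)) (s y != s (e y)) = (x == u) (+) (x == v).
Proof.
rewrite -label_parity -vertex_parity [X in _ (+) X](bigID (fun y => y \in T)) /=.
by rewrite addbCA addbb addbF.
Qed.

Lemma tree_side_parity t : t \in T ->
  \xor_(x | tree_side t x) ((x == u) (+) (x == v)) = (s t != s (e t)).
Proof.
move=> tT; set c := tree_side t.
rewrite (eq_bigr (fun x => \xor_(y | ((y \in T) && c (vert y)) && (vert y == x))
    (s y != s (e y)))); last first.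
  move=> x cx; rewrite -tree_parity; apply: eq_bigl => y.
  by case: (eqVneq (vert y) x) => [->|]; rewrite ?cx ?andbT ?andbF // andbC.
rewrite -(partition_big vert c (P := fun y => (y \in T) && c (vert y))
   (F := fun y => s y != s (e y))); last by move=> y /andP [].
have ct : c (vert t) by apply: connect0.
have nce : ~~ c (vert (e t)) by apply: T_bridge.
rewrite (bigD1 t) /= ?tT ?ct // (big_addb_involution (f := e)) ?addbF //.
- exact: edgeK.
- exact: edge_neq.
- have imp y : ((y \in T) && c (vert y)) && (y != t) ->
      ((e y \in T) && c (vert (e y))) && (e y != t).
    case/andP => /andP [yT cy] yt.
    have yet : y != e t by apply: contra nce => /eqP <-.
    have yT' : y \in T :\ t :\ e t by rewrite !inE yT yt yet.
    have -> : c (vert (e y)) := connect_trans cy (connect1 (adjE_dart _ _ yT')).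
    rewrite T_closed yT /=.
    by apply: contra yet => /eqP <-; rewrite edgeK.
  by move=> y; apply/idP/idP => /imp //; rewrite edgeK.
- by move=> y; rewrite edgeK eq_sym.
Qed.

Lemma tree_cross_separates t : t \in T -> s t != s (e t) -> tree_side t u != tree_side t v.
Proof.
move=> tT ct; have := tree_side_parity tT; rewrite ct => /esym.
rewrite big_split /= [X in X (+) _]big_addb_andl [X in _ (+) X]big_addb_andl.
rewrite (eq_bigr (fun x => (x == u) && tree_side t u)); last first.
  by move=> x _; case: eqP => [->|]; rewrite ?andbF ?andbT.
rewrite [X in _ (+) X](eq_bigr (fun x => (x == v) && tree_side t v)); last first.
  by move=> x _; case: eqP => [->|]; rewrite ?andbF ?andbT.
by rewrite !big_addb_pred1; case: (tree_side t u); case: (tree_side t v).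
Qed.

Lemma tree_cross_on_path t p : t \in T -> s t != s (e t) ->
  path (adjE e vert T) u p -> last u p = v ->
  vert t \in u :: p /\ vert (e t) \in u :: p.
Proof.
move=> tT ct pth lst; have := tree_cross_separates tT ct; rewrite -lst.
have csym := adjE_connect_sym vert edgeK (e_closed_remove edgeK t T_closed).
elim: p u pth {lst} => [|w p IH] x /=; first by rewrite eqxx.
case/andP => /existsP [d /and3P [dT /eqP dx /eqP dw]] pth cxl.
case: (eqVneq (tree_side t x) (tree_side t w)) => [cxw|nxw].
  rewrite cxw in cxl; case: (IH _ pth cxl) => h1 h2.
  by split; rewrite in_cons ?h1 ?h2 orbT.
have : [|| d \in T :\ t :\ e t, d == e t | d == t].
  by rewrite !inE dT andbT; case: (d == t); case: (d == e t).
case/or3P => [dT'|/eqP de|/eqP dt].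
- have cxw : adjE e vert (T :\ t :\ e t) x w by rewrite -dx -dw adjE_dart.
  by rewrite (same_connect_r csym (connect1 cxw)) eqxx in nxw.
- by rewrite de edgeK in dw; rewrite de in dx; rewrite -dx -dw !inE !eqxx !orbT.
- by rewrite dt in dx dw; rewrite -dx -dw !inE !eqxx !orbT.
Qed.

Hypothesis cotree_change_at_ends : forall y,
  y \notin T -> s y != s (e y) -> vert y = u \/ vert y = v.
Hypothesis corner_change_at_ends : forall z,
  s z != s (phi z) -> vert (phi z) = u \/ vert (phi z) = v.

Variable p : seq V.
Hypotheses (p_path : path (adjE e vert T) u p) (p_last : last u p = v).

Lemma label_off_path y : vert y \notin u :: p -> s (e y) = s y /\ s (n y) = s y.
Proof.
have uP : u \in u :: p by rewrite mem_head.
have vP : v \in u :: p by rewrite -p_last mem_last.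
move=> yP; have se : s (e y) = s y.
  apply/esym/eqP/negP => /negP cy; case: (boolP (y \in T)) => yT.
    by case: (tree_cross_on_path yT cy p_path p_last) => yP'; rewrite yP' in yP.
  by case: (cotree_change_at_ends yT cy) => vy; rewrite vy ?uP ?vP in yP.
split=> //; rewrite -face_perm_edge -se; apply/esym/eqP/negP => /negP cy.
by case: (corner_change_at_ends cy); rewrite vert_face_perm edgeK => vy;
  rewrite vy ?uP ?vP in yP.
Qed.

Lemma label_vertex_off_path y y' :
  vert y \notin u :: p -> vert y' = vert y -> s y' = s y.
Proof.
move=> yP; apply: vert_rot_invariant => z zy.
by case: (label_off_path (y := z) _) => //; rewrite zy.
Qed.

Lemma label_component_off_path y y' : vert y \notin u :: p ->
  connect (avoid (adjG e vert) [set x in u :: p]) (vert y) (vert y') -> s y' = s y.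
Proof.
move=> yP /connectP [q qp lq]; elim: q y yP qp lq => [|w q IH] y yP /=.
  by move=> _; apply: label_vertex_off_path.
case/andP => /and3P [_ wP /existsP [d /and3P [_ /eqP dy /eqP dw]]] qp lq.
have sd : s d = s y by apply: label_vertex_off_path dy.
have sed : s (e d) = s d by case: (label_off_path (y := d) _) => //; rewrite dy.
by rewrite inE in wP; rewrite (IH (e d)) ?dw ?sed.
Qed.

Variables (R : numDomainType) (wV : V -> R) (c : R).
Hypothesis wV_ge0 : forall x, 0 <= wV x.
Hypothesis label_weight : forall b : bool,
  \sum_(x | (x \notin u :: p) && [exists y, (vert y == x) && (s y == b)]) wV x
    <= c * \sum_x wV x.

Lemma label_balanced_separator :
  balanced_separator (adjG e vert) wV c [set x in u :: p].
Proof.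
move=> x; rewrite inE => xP; case: (vert_surj x) => y0 y0x.
apply: le_trans (label_weight (s y0)); apply: ler_sum_subpred => // z /andP [].
rewrite inE => zP cz; rewrite zP /=; case: (vert_surj z) => y1 y1z.
apply/existsP; exists y1; rewrite y1z eqxx /=.
by apply/eqP/(label_component_off_path (y := y0)); rewrite y0x ?y1z.
Qed.

End Separation.

Section Cotree.
Variable T : {set D}.
Hypotheses (T_tree : spanning_tree e vert T) (G_connected : connected_rel (adjG e vert)).

Local Notation cot := (adj_cotree e fc T).

Lemma tree_closed : e_closed e T. Proof. by case: T_tree. Qed.
Lemma tree_connected : connected_rel (adjE e vert T). Proof. by case: T_tree. Qed.
Lemma tree_bridge d : d \in T ->
  ~~ connect (adjE e vert (T :\ d :\ e d)) (vert d) (vert (e d)).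
Proof. by case: T_tree => _ _; apply. Qed.

Lemma cotree_closed : e_closed e (~: T).
Proof. by move=> d; rewrite !inE tree_closed. Qed.

Lemma adj_cotreeE : cot =2 adjE e fc (~: T).
Proof.
move=> g h; apply/existsP/existsP => [] [d]; first by exists d; rewrite inE.
by rewrite inE; exists d.
Qed.

Lemma adj_cotree_sym : symmetric cot.
Proof.
by move=> g h; rewrite !adj_cotreeE (adjE_sym fc edgeK cotree_closed).
Qed.

Lemma adj_cotree_dart y : y \notin T -> cot (fc y) (fc (e y)).
Proof. by move=> yT; apply/existsP; exists y; rewrite yT !eqxx. Qed.

Lemma label_constant (s : D -> bool) :
  (forall y, s (e y) = s y) -> (forall y, s (n y) = s y) -> forall y y', s y' = s y.
Proof.
move=> se sn y y'; case/connectP: (G_connected (vert y) (vert y')) => q.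
elim: q y => [|w q IH] y /=; first by move=> _; apply: vert_rot_invariant.
case/andP => /existsP [d /andP [_ /andP [/eqP dy /eqP dw]]] qp lq.
by rewrite (IH (e d)) ?dw // se; apply: vert_rot_invariant dy.
Qed.

(* The label "the face is reachable from g in the cotree" only changes across
   tree edges, so with u = v the separation argument makes it constant. *)
Lemma cotree_connected g h : connect cot g h.
Proof.
pose s y := connect cot g (fc y).
have s_cotree y : y \notin T -> s (e y) = s y.
  move=> yT; apply/idP/idP => gy.
    by apply: connect_trans gy (connect1 _); rewrite adj_cotree_sym adj_cotree_dart.
  exact: connect_trans gy (connect1 (adj_cotree_dart yT)).
have s_face z : s (phi z) = s z by rewrite /s fc_face_perm.
case: (fc_surj g) => y0 fy0.
have parity x : \xor_(y | (vert y == x) && (y \notin T)) (s y != s (e y)) (+)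
    \xor_(z | vert (phi z) == x) (s z != s (phi z)) = (x == vert y0) (+) (x == vert y0).
  rewrite addbb !big1 // => [z _|y /andP [_ yT]]; first by rewrite s_face eqxx.
  by rewrite s_cotree // eqxx.
have se y : s (e y) = s y.
  case: (boolP (y \in T)) => yT; first last; first exact: s_cotree.
  apply/esym/eqP/negP => /negP cy.
  by have := tree_cross_separates tree_closed tree_bridge parity yT cy; rewrite eqxx.
have sn y : s (n y) = s y by rewrite -face_perm_edge s_face se.
case: (fc_surj h) => y1 fy1.
by have := label_constant se sn y0 y1; rewrite /s fy0 fy1 => ->; apply: connect0.
Qed.

(* Euler's formula makes the cotree have exactly |F| - 1 edges; as it is
   connected, dropping any edge must disconnect it. *)
Lemma cotree_bridge y : y \notin T ->
  ~~ connect (adjE e fc (~: T :\ y :\ e y)) (fc y) (fc (e y)).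
Proof.
move=> yT; apply/negP => cyc.
have yM : y \in ~: T by rewrite inE.
have n1 : n_components e fc (~: T) = 1%N.
  apply: (n_components_connected (fc y)) => g h.
  by rewrite -(eq_connect adj_cotreeE); apply: cotree_connected.
have := n_components_lower_bound fc edgeK edge_neq (e_closed_remove edgeK y cotree_closed).
rewrite (n_components_remove_cycle_edge edgeK cotree_closed yM cyc) n1.
have := n_components_forest edgeK edge_neq tree_closed tree_bridge.
rewrite (n_components_connected (vert y) tree_connected).
have := card_remove_edge edge_neq cotree_closed yM.
have := cardsC T; have := euler_formula.
have : (#|D| %% 2 = 0)%N by rewrite modn2 card_darts_even.
lia.
Qed.

Lemma cotree_no_loop y : y \notin T -> fc (e y) != fc y.
Proof.
by move=> yT; apply: contraNneq (cotree_bridge yT) => ->; apply: connect0.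
Qed.

Lemma avoid_cotree_remove_edge y (S : {set F}) : y \notin T ->
  (fc y \in S) || (fc (e y) \in S) ->
  subrel (avoid cot S) (adjE e fc (~: T :\ y :\ e y)).
Proof.
move=> yT yS g h /and3P [gS hS /existsP [d /and3P [dT /eqP dg /eqP dh]]].
have dy : d != y.
  by apply: contraTneq yS => dd; rewrite -dd dg dh negb_or gS hS.
have dey : d != e y.
  by apply: contraTneq yS => dd; rewrite dd edgeK in dh; rewrite -dd dg dh negb_or gS hS.
by rewrite -dg -dh adjE_dart // !inE dT dy dey.
Qed.

Lemma avoid_cotree_bridge z (S : {set F}) g g' : z \notin T ->
  (fc z \in S) || (fc (e z) \in S) -> connect (avoid cot S) g g' ->
  connect (adjE e fc (~: T :\ z :\ e z)) g g'.
Proof.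
move=> zT zS; apply: connect_sub => a b ab.
exact/connect1/(avoid_cotree_remove_edge zT zS ab).
Qed.

Lemma cotree_branches_disjoint y z (S : {set F}) : y \notin T -> z \notin T ->
  fc z = fc y -> fc y \in S -> z != y -> z != e y ->
  ~~ connect (avoid cot S) (fc (e z)) (fc (e y)).
Proof.
move=> yT zT fz fS zy zey; apply: contra (cotree_bridge yT) => c.
apply: (connect_trans (y := fc (e z))).
  by rewrite -fz; apply/connect1/adjE_dart; rewrite !inE zy zey zT.
by apply: (avoid_cotree_bridge yT _ c); rewrite fS.
Qed.

Variables (rt : F) (R : realFieldType) (wV : V -> R) (tf : V -> F).
Hypotheses (wV_ge0 : forall x, 0 <= wV x)
  (tf_face : forall x, exists d, vert d = x /\ fc d = tf x).

Local Notation sub := (in_subtree e fc T rt).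
Local Notation wf := (wF wV tf).
Local Notation wsub := (wsub e fc T rt wf).

Lemma wF_ge0 g : 0 <= wf g.
Proof. exact: sumr_ge0. Qed.

Lemma sum_wF (P : pred F) : \sum_(x | P (tf x)) wV x = \sum_(g | P g) wf g.
Proof.
rewrite (partition_big tf P) //; apply: eq_bigr => g Pg.
by apply: eq_bigl => x; case: eqP => [->|]; rewrite ?Pg ?andbF.
Qed.

Lemma sum_wF_total : \sum_g wf g = \sum_x wV x.
Proof. by rewrite -(sum_wF predT). Qed.

Lemma wsubE f : wsub f = \sum_(x | sub f (tf x)) wV x.
Proof. by rewrite sum_wF. Qed.

Lemma avoid_cotree_connect_sym (S : {set F}) : connect_sym (avoid cot S).
Proof. exact/avoid_connect_sym/adj_cotree_sym. Qed.

Lemma in_subtree_refl f : sub f f.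
Proof. by rewrite /in_subtree eqxx. Qed.

Lemma in_subtreeE f g : g != f -> sub f g = ~~ connect (avoid cot [set f]) g rt.
Proof. by move=> gf; rewrite /in_subtree (negbTE gf). Qed.

Lemma in_subtree_root g : sub rt g.
Proof.
rewrite /in_subtree; case: eqP => //= ne; apply/negP => c.
by apply: ne; apply: connect_avoid_dst c _; rewrite inE.
Qed.

Lemma wsub_root : wsub rt = \sum_g wf g.
Proof. by apply: eq_bigl => g; rewrite in_subtree_root. Qed.

Lemma in_subtree_child f h g : child e fc T rt f h -> sub h g -> sub f g.
Proof.
case/and3P => _ sfh hf.
have nh : ~~ connect (avoid cot [set f]) h rt by rewrite -in_subtreeE.
rewrite {1}/in_subtree; case: (eqVneq g h) => [->|gh] //= ngr.
case: (eqVneq g f) => [->|gf]; first exact: in_subtree_refl.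
rewrite in_subtreeE //; apply/negP => ca; case/negP: (nh).
case: (connect_avoid_exit (r := avoid cot [set f]) (S := [set h]) ca _).
- by rewrite inE; apply: contraNneq nh => <-; apply: connect0.
- by move=> c; case/negP: ngr; apply: connect_avoid_subrel c; apply: avoid_subrel.
move=> [s0 [b [/set1P -> hb _ c]]]; apply: connect_trans (connect1 hb) _.
by apply: connect_sub c => x y /avoid_subrel/connect1.
Qed.

Lemma child_not_ancestor f h : child e fc T rt f h -> ~~ sub h f.
Proof.
case/and3P => _ sfh hf.
have nh : ~~ connect (avoid cot [set f]) h rt by rewrite -in_subtreeE.
rewrite in_subtreeE 1?eq_sym // negbK.
case: (eqVneq rt f) => [->|rtf]; first exact: connect0.
have rth : rt != h by apply: contraNneq nh => <-; apply: connect0.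
case: (connect_avoid_exit (S := [set f; h]) (cotree_connected f rt)).
- by rewrite !inE negb_or rtf rth.
- by move=> /connect_avoid_src; rewrite !inE eqxx => /(_ isT) ft; rewrite ft eqxx in rtf.
move=> [s0 [b [s0S s0b]]]; rewrite !inE negb_or => /andP [bf bh] c.
have cS (S : {set F}) : S \subset [set f; h] -> connect (avoid cot S) b rt.
  by move=> sS; apply: connect_avoid_subset c.
case/set2P: s0S => s0E; rewrite s0E in s0b.
  apply: connect_trans (connect1 _) (cS _ _); last by rewrite subsetUr.
  by rewrite /avoid !inE eq_sym hf bh.
case/negP: nh; apply: connect_trans (connect1 _) (cS _ _); last by rewrite subsetUl.
by rewrite /avoid !inE hf bf.
Qed.

Lemma critical_node_exists :
  (~ exists f, balanced_node e fc T rt wf (1/4) (3/4) f) ->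
  exists f, critical_node e fc T rt wf (1/4) (3/4) f.
Proof.
move=> nb; set W := \sum_g wf g.
have W_gt0 : 0 < W.
  rewrite lt_def sumr_ge0 ?andbT => [|g _]; last exact: wF_ge0.
  apply: contra_notN nb => /eqP W0; exists rt.
  by rewrite /balanced_node wsub_root -/W W0 !mulr0.
pose heavy k := [exists f, (3/4 * W < wsub f) && (#|[set g | sub f g]| == k)].
have root_heavy : heavy #|[set g | sub rt g]|.
  by apply/existsP; exists rt; rewrite eqxx andbT wsub_root -/W; lra.
case: (ex_minnP (ex_intro heavy _ root_heavy)) => k /existsP [f /andP [hf /eqP kf]] mink.
exists f; split=> // h ch; rewrite ltNge; apply/negP => lo; apply: nb.
exists h; split=> //; rewrite leNgt; apply/negP => hh.
have : (k <= #|[set g | sub h g]|)%N.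
  by apply: mink; apply/existsP; exists h; rewrite hh eqxx.
rewrite -kf leqNgt => /negP; apply.
apply/proper_card/properP; split.
  by apply/subsetP => g; rewrite !inE; apply: in_subtree_child.
by exists f; rewrite !inE ?in_subtree_refl // (negbTE (child_not_ancestor ch)).
Qed.

(* Otherwise [fc z] reaches [g] avoiding [fc (e z)], which closes a cycle through
   the cotree edge [z]. *)
Lemma branch_below_child z g : z \notin T -> sub (fc z) (fc (e z)) ->
  connect (avoid cot [set fc z]) (fc (e z)) g -> sub (fc (e z)) g.
Proof.
move=> zT sfh hg; have hf := cotree_no_loop zT.
have nh : ~~ connect (avoid cot [set fc z]) (fc (e z)) rt by rewrite -in_subtreeE.
case: (eqVneq g (fc (e z))) => [->|gh]; first exact: in_subtree_refl.
have gf : g \notin [set fc z].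
  by apply: contraNN hf => gS; rewrite (connect_avoid_dst hg gS) -in_set1.
rewrite in_subtreeE //; apply/negP; rewrite avoid_cotree_connect_sym => rtg.
case: (connect_avoid_exit rtg gf) => [c|[s0 [b [/set1P -> fb _ bg]]]].
  case/negP: nh; apply: connect_trans hg _.
  by rewrite avoid_cotree_connect_sym; apply: connect_avoid_subrel c; apply: avoid_subrel.
have fg : connect (avoid cot [set fc (e z)]) (fc z) g.
  apply: connect_trans (connect1 fb) _.
  by apply: connect_sub bg => x y /avoid_subrel/connect1.
have zh : (fc z \in [set fc (e z)]) || (fc (e z) \in [set fc (e z)]) by rewrite set11 orbT.
have zf : (fc z \in [set fc z]) || (fc (e z) \in [set fc z]) by rewrite set11.
case/negP: (cotree_bridge zT); apply: connect_trans (avoid_cotree_bridge zT zh fg) _.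
rewrite (adjE_connect_sym _ edgeK (e_closed_remove edgeK z cotree_closed)).
exact: avoid_cotree_bridge zT zf hg.
Qed.

Section BalancedNode.
Variables (f : F) (d : D).
Hypothesis d_parent : parent_dart e fc T rt f d.

Local Notation below y := (sub f (fc y)).

Let d_cotree : d \notin T. Proof. by case/and3P: d_parent. Qed.
Let fc_d : fc d = f. Proof. by case/and3P: d_parent => _ /eqP. Qed.
Let below_d : below d. Proof. by rewrite fc_d in_subtree_refl. Qed.
Let not_below_ed : ~~ below (e d). Proof. by case/and3P: d_parent. Qed.

Lemma subtree_exit_dart y : y \notin T -> below y -> ~~ below (e y) -> y = d.
Proof.
move=> yT sy sey.
have fey : fc (e y) != f by apply: contraNneq sey => ->; apply: in_subtree_refl.
have cey : connect (avoid cot [set f]) (fc (e y)) rt.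
  by move: sey; rewrite in_subtreeE ?negbK.
have fy : fc y = f.
  apply: contraTeq sy => fyf; rewrite in_subtreeE // negbK.
  apply: connect_trans cey; apply: connect1.
  by rewrite /avoid !inE fyf fey adj_cotree_dart.
have fed : fc (e d) != f by apply: contraNneq not_below_ed => ->; apply: in_subtree_refl.
have ced : connect (avoid cot [set f]) (fc (e d)) rt.
  by move: not_below_ed; rewrite in_subtreeE ?negbK.
case: (eqVneq y d) => // yd; exfalso.
have yed : y != e d by apply: contraNneq not_below_ed => <-; rewrite fy in_subtree_refl.
have := cotree_branches_disjoint (S := [set f]) d_cotree yT.
rewrite fy fc_d inE eqxx => /(_ erefl isT yd yed) /negP; apply.
by apply: connect_trans cey _; rewrite avoid_cotree_connect_sym.
Qed.

Lemma subtree_change_dart y : y \notin T -> below y != below (e y) -> y = d \/ y = e d.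
Proof.
move=> yT; case sy: (below y); case sey: (below (e y)) => //= _.
  by left; apply: subtree_exit_dart; rewrite ?sy ?sey.
right; rewrite -[y]edgeK; congr e.
by apply: subtree_exit_dart; rewrite ?tree_closed ?edgeK ?sy ?sey.
Qed.

Lemma subtree_label_parity x :
  \xor_(y | (vert y == x) && (y \notin T)) (below y != below (e y)) (+)
  \xor_(z | vert (phi z) == x) (below z != below (phi z)) =
  (x == vert d) (+) (x == vert (e d)).
Proof.
rewrite [X in _ (+) X]big1 => [|z _]; last by rewrite fc_face_perm eqxx.
rewrite addbF big_addb_andl (eq_bigr (fun y =>
  ((y == d) && (vert d == x)) || ((y == e d) && (vert (e d) == x)))).
  by rewrite big_addb_pred2 1?eq_sym ?edge_neq // ![x == _]eq_sym.
move=> y _; case: (eqVneq y d) => [->|yd] /=.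
  rewrite d_cotree below_d (negbTE not_below_ed) [d == _]eq_sym (negbTE (edge_neq d)).
  by rewrite andbT orbF /= andbT.
case: (eqVneq y (e d)) => [->|yed] /=.
  by rewrite tree_closed d_cotree edgeK below_d (negbTE not_below_ed) /= !andbT.
apply/negP => /andP [/andP [_ yT] cy].
by case: (subtree_change_dart yT cy) => /eqP; rewrite ?(negbTE yd) ?(negbTE yed).
Qed.

Lemma balanced_node_separator p :
  balanced_node e fc T rt wf (1/4) (3/4) f ->
  simple_path (adjE e vert T) (vert d) p (vert (e d)) ->
  balanced_separator (adjG e vert) wV (3/4) [set x in vert d :: p].
Proof.
case=> lo hi /and3P [pth /eqP lst _].
have cotree_change y : y \notin T -> below y != below (e y) ->
    vert y = vert d \/ vert y = vert (e d).
  by move=> yT /(subtree_change_dart yT) [] ->; [left|right].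
have corner_change z : below z != below (phi z) ->
    vert (phi z) = vert d \/ vert (phi z) = vert (e d).
  by rewrite fc_face_perm eqxx.
apply: (label_balanced_separator tree_closed tree_bridge subtree_label_parity
  cotree_change corner_change pth lst wV_ge0) => b.
apply: le_trans (_ : \sum_(x | sub f (tf x) == b) wV x <= _).
  apply: ler_sum_subpred => // x /andP [xP /existsP [y /andP [/eqP yx /eqP sy]]].
  case: (tf_face x) => y' [y'x fy'].
  have := label_vertex_off_path tree_closed tree_bridge subtree_label_parity
    cotree_change corner_change pth lst (y := y) (y' := y').
  by rewrite yx y'x -fy' -sy => /(_ xP erefl) ->.
rewrite sum_wF_total wsubE in lo hi; case: b.
  by rewrite (eq_bigl (fun x => sub f (tf x))) // => x; rewrite eqb_id.
rewrite (eq_bigl (fun x => ~~ sub f (tf x))) => [|x]; last by rewrite eqbF_neg.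
by rewrite sumr_predC; lra.
Qed.

End BalancedNode.

Section CriticalNode.
Variable f : F.
Hypothesis f_critical : critical_node e fc T rt wf (1/4) (3/4) f.
Variable z0 : D.
Hypothesis fc_z0 : fc z0 = f.

Local Notation k := (order phi z0).
Local Notation idx := (findex phi z0).
Local Notation corner i := (iter i phi z0).
Local Notation av := (connect (avoid cot [set f])).

Lemma on_face y : (fc y == f) = fconnect phi z0 y.
Proof. by rewrite -fc_z0 eq_sym eq_fc. Qed.

Lemma findex_lt_order y : fc y = f -> (idx y < k)%N.
Proof. by move=> fy; apply: findex_max; rewrite -on_face fy. Qed.

Lemma corner_findex y : fc y = f -> corner (idx y) = y.
Proof. by move=> fy; apply: iter_findex; rewrite -on_face fy. Qed.

Lemma findex_corner i : (i < k)%N -> idx (corner i) = i.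
Proof. exact: findex_iter. Qed.

Lemma corner_order : corner k = z0.
Proof. exact: (iter_order face_perm_inj). Qed.

Lemma fc_corner i : fc (corner i) = f.
Proof. by rewrite fc_iter_face_perm. Qed.

Lemma eq_corner y m : (m < k)%N -> (fc y == f) && (idx y == m) = (y == corner m).
Proof.
move=> mk; apply/idP/eqP => [/andP [/eqP fy /eqP <-]|->]; first by rewrite corner_findex.
by rewrite fc_corner findex_corner // !eqxx.
Qed.

Lemma branch_not_face z g : z \notin T -> fc z = f -> av (fc (e z)) g -> g != f.
Proof.
move=> zT fz c; apply: contraNneq (cotree_no_loop zT) => gf.
by rewrite fz (connect_avoid_dst c) ?gf ?inE.
Qed.

Lemma branch_weight_lt z : z \notin T -> fc z = f ->
  \sum_(g | av (fc (e z)) g) wf g < 1/4 * \sum_g wf g.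
Proof.
move=> zT fz; have hf : fc (e z) != f by rewrite -fz cotree_no_loop.
case: f_critical => heavy light.
case sfh: (sub f (fc (e z))).
  have ch : child e fc T rt f (fc (e z)) by rewrite /child sfh hf -fz adj_cotree_dart.
  apply: le_lt_trans (light _ ch); apply: ler_sum_subpred; first exact: wF_ge0.
  by move=> g; rewrite -fz => /(branch_below_child zT); rewrite fz; apply.
apply: (le_lt_trans (y := \sum_(g | ~~ sub f g) wf g)).
  apply: ler_sum_subpred; first exact: wF_ge0.
  move=> g hg; rewrite in_subtreeE ?negbK ?(branch_not_face zT fz hg) //.
  rewrite avoid_cotree_connect_sym in hg; apply: connect_trans hg _.
  by move/negbT: sfh; rewrite in_subtreeE ?negbK.
by rewrite sumr_predC; move: heavy; rewrite /wsub; lra.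
Qed.

(* The vertices whose weight went into a branch leaving one of the first [j]
   corners of [f], or into [f] itself from one of these corners but the first. *)
Definition swept (j : nat) : {set V} :=
  [set x | [exists z, [&& fc z == f, (idx z < j)%N &
     ((z \notin T) && av (fc (e z)) (tf x)) ||
     [&& (0 < idx z)%N, tf x == f & x == vert z]]]].

Lemma swept0 : \sum_(x in swept 0) wV x = 0.
Proof. by apply: big1 => x; rewrite inE => /existsP [z /and3P []]. Qed.

Section Sweep.
Variable j : nat.
Hypothesis j_le_k : (j <= k)%N.

(* The darts of the faces swept by the first [j] corners of [f]: those
   corners themselves and the cotree branches hanging off their edges. *)
Definition sweep_label (y : D) : bool :=
  if fc y == f then (idx y < j)%N
  else [exists z, [&& z \notin T, fc z == f, (idx z < j)%N & av (fc (e z)) (fc y)]].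

Lemma sweep_label_edge_face y : y \notin T -> fc y = f -> sweep_label (e y) = sweep_label y.
Proof.
move=> yT fy; have fey : fc (e y) != f by rewrite -fy cotree_no_loop.
rewrite /sweep_label fy eqxx (negbTE fey); apply/existsP/idP => [[z]|iy].
  case/and4P => zT /eqP fz ij c; case: (eqVneq z y) => [<- //|zy].
  case: (eqVneq z (e y)) => [ze|zey]; first by rewrite -ze fz eqxx in fey.
  have := cotree_branches_disjoint (S := [set f]) yT zT.
  by rewrite fz fy inE eqxx c => /(_ erefl isT zy zey).
by exists y; rewrite yT fy eqxx iy connect0.
Qed.

Lemma sweep_label_cotree y : y \notin T -> sweep_label (e y) = sweep_label y.
Proof.
move=> yT; case: (eqVneq (fc y) f) => [fy|fy]; first exact: sweep_label_edge_face.
case: (eqVneq (fc (e y)) f) => [fey|fey].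
  by rewrite -(sweep_label_edge_face _ fey) ?edgeK // tree_closed.
rewrite /sweep_label (negbTE fy) (negbTE fey).
have yey : avoid cot [set f] (fc y) (fc (e y)).
  by rewrite /avoid !inE fy fey adj_cotree_dart.
apply/existsP/existsP => [] [z /and4P [zT fz ij c]]; exists z; rewrite zT fz ij /=.
  by apply: connect_trans c _; rewrite (avoid_cotree_connect_sym [set f]); apply: connect1.
exact: connect_trans c (connect1 yey).
Qed.

Lemma sweep_label_corner z : (sweep_label z != sweep_label (phi z)) =
  (fc z == f) && [&& (0 < j)%N, (j < k)%N & (idx z == j.-1) || (idx z == k.-1)].
Proof.
rewrite /sweep_label fc_face_perm; case: (eqVneq (fc z) f) => fz /=; last by rewrite eqxx.
have := findex_lt_order fz; have pz : phi z = corner (idx z).+1 by rewrite /= corner_findex.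
case: (ltngtP (idx z).+1 k) => h ik.
- by rewrite pz findex_corner //; lia.
- by lia.
- by rewrite pz h corner_order findex0; lia.
Qed.

Local Notation s := sweep_label.
Local Notation u := (vert z0).
Local Notation v := (vert (corner j)).

(* Around [f] the label is true exactly on the corners [0 .. j-1]: it switches
   at the corners [j-1 -> j] (vertex [v]) and [k-1 -> 0] (vertex [u]). *)
Lemma sweep_label_parity x :
  \xor_(y | (vert y == x) && (y \notin T)) (s y != s (e y)) (+)
  \xor_(z | vert (phi z) == x) (s z != s (phi z)) = (x == u) (+) (x == v).
Proof.
rewrite big1 => [|y /andP [_ yT]]; last by rewrite sweep_label_cotree // eqxx.
rewrite /= big_addb_andl.
case: (boolP [&& (0 < j)%N & (j < k)%N]) => [/andP [j0 jk]|nj]; last first.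
  have -> : corner j = z0.
    have : j = 0%N \/ j = k by lia.
    by case=> ->; rewrite ?corner_order.
  rewrite addbb big1 // => z _; rewrite sweep_label_corner.
  by move: nj; case: (0 < j)%N; case: (j < k)%N; rewrite ?andbF.
have j1 : (j.-1 < k)%N by lia.
have k1 : (k.-1 < k)%N by rewrite prednK ?order_gt0.
have last_corner : phi (corner k.-1) = z0.
  by rewrite -iterS prednK ?order_gt0 ?corner_order.
have prev_corner : phi (corner j.-1) = corner j by rewrite -iterS prednK.
have dif : corner j.-1 != corner k.-1.
  by apply/negP => /eqP /(congr1 idx); rewrite !findex_corner //; lia.
rewrite (eq_bigr (fun z =>
  ((z == corner j.-1) && (v == x)) || ((z == corner k.-1) && (u == x)))).
  by rewrite big_addb_pred2 // ![x == _]eq_sym addbC.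
move=> z _; rewrite sweep_label_corner j0 jk /= -!eq_corner //.
case: (eqVneq (fc z) f) => fz /=; last by rewrite andbF.
case: (eqVneq (idx z) j.-1) => ij /=.
  have jk1 : (j.-1 == k.-1) = false by apply/negbTE; apply: contraNneq dif => ->.
  by rewrite ij jk1 /= -(corner_findex fz) ij prev_corner andbT orbF eq_sym.
case: (eqVneq (idx z) k.-1) => ik /=; last by rewrite andbF.
by rewrite -(corner_findex fz) ik last_corner andbT.
Qed.

Lemma sweep_cotree_change y : y \notin T -> s y != s (e y) -> vert y = u \/ vert y = v.
Proof. by move=> yT; rewrite sweep_label_cotree // eqxx. Qed.

Lemma sweep_corner_change z : s z != s (phi z) -> vert (phi z) = u \/ vert (phi z) = v.
Proof.
rewrite sweep_label_corner => /andP [/eqP fz /and3P [j0 jk /orP [/eqP ij|/eqP ik]]].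
  by right; rewrite -(corner_findex fz) ij -iterS prednK.
by left; rewrite -(corner_findex fz) ik -iterS prednK ?order_gt0 // corner_order.
Qed.

Section SweepPath.
Variable p : seq V.
Hypotheses (p_path : path (adjE e vert T) u p) (p_last : last u p = v).

Lemma sweep_label_vertex y y' : vert y \notin u :: p -> vert y' = vert y -> s y' = s y.
Proof.
exact: (label_vertex_off_path tree_closed tree_bridge sweep_label_parity
  sweep_cotree_change sweep_corner_change p_path p_last).
Qed.

Lemma transfer_dart_label x y : x \notin u :: p -> vert y = x ->
  exists y', [/\ vert y' = x, fc y' = tf x & s y' = s y].
Proof.
move=> xP yx; case: (tf_face x) => y' [y'x ty']; exists y'; split=> //.
by apply: sweep_label_vertex; rewrite ?yx ?y'x.
Qed.

Lemma sweep_true_weight :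
  \sum_(x | (x \notin u :: p) && [exists y, (vert y == x) && (s y == true)]) wV x
  <= \sum_(x in swept j) wV x.
Proof.
apply: ler_sum_subpred => // x /andP [xP /existsP [y /andP [/eqP yx /eqP sy]]].
case: (transfer_dart_label xP yx) => y' [y'x ty']; rewrite sy inE.
rewrite /sweep_label; case: (eqVneq (fc y') f) => [fy' iy|fy' /existsP [z]] /=.
  have i0 : (0 < idx y')%N.
    rewrite lt0n; apply: contraNneq xP => i0.
    by rewrite -y'x -(corner_findex fy') i0 mem_head.
  by apply/existsP; exists y'; rewrite fy' eqxx iy i0 -ty' fy' y'x !eqxx orbT.
case/and4P => zT fz iz c.
by apply/existsP; exists z; rewrite fz iz zT -ty' c.
Qed.

Lemma sweep_false_weight_full : j = k ->
  \sum_(x | (x \notin u :: p) && [exists y, (vert y == x) && (s y == false)]) wV x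
  <= 0.
Proof.
move=> jk; rewrite big_pred0 // => x; apply/negbTE/negP.
case/andP => xP /existsP [y /andP [/eqP yx /eqP sy]].
case: (transfer_dart_label xP yx) => y' [y'x ty']; rewrite sy.
rewrite /sweep_label; case: (eqVneq (fc y') f) => [fy'|fy'] /=.
  by rewrite jk findex_lt_order.
move/negbT/negP; apply.
case: (connect_avoid_exit (S := [set f]) (cotree_connected f (fc y'))).
- by rewrite inE.
- by move/connect_avoid_src; rewrite inE eqxx => /(_ isT) fe; rewrite fe eqxx in fy'.
move=> [s0 [b [/set1P -> /existsP [z /and3P [zT /eqP fz /eqP fez]] _ c]]].
by apply/existsP; exists z; rewrite zT fz eqxx jk findex_lt_order //= fez.
Qed.

Lemma sweep_false_weight : (j < k)%N ->
  \sum_(x | (x \notin u :: p) && [exists y, (vert y == x) && (s y == false)]) wV x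
  <= \sum_(x | x \notin swept j.+1) wV x +
     \sum_(x | (corner j \notin T) && av (fc (e (corner j))) (tf x)) wV x.
Proof.
move=> jk; apply: ler_sum_predU => // x /andP [xP /existsP [y /andP [/eqP yx /eqP sy]]].
case: (transfer_dart_label xP yx) => y' [y'x ty']; rewrite sy => sy'.
case: (boolP (x \in swept j.+1)) => //=.
rewrite inE => /existsP [z /and3P [/eqP fz izj hz]].
case: (ltngtP (idx z) j) => ij.
- exfalso; case/orP: hz => [/andP [zT c]|/and3P [i0 /eqP tfx /eqP xz]].
    move: sy'; rewrite /sweep_label ty' (negbTE (branch_not_face zT fz c)).
    move=> /negbT/negP; apply.
    by apply/existsP; exists z; rewrite zT fz eqxx ij c.
  have : s z = s y' by apply: sweep_label_vertex; rewrite y'x // -xz.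
  by rewrite sy' /sweep_label fz eqxx ij.
- by move: izj; rewrite ltnS leqNgt ij.
- have zj : z = corner j by rewrite -ij corner_findex.
  case/orP: hz => [|/and3P [_ _ /eqP xz]]; first by rewrite zj.
  by rewrite xz zj -p_last mem_last in xP.
Qed.

End SweepPath.

Hypothesis j_light : \sum_(x in swept j) wV x <= 3/4 * \sum_x wV x.
Hypothesis j_max : forall j', (j' <= k)%N ->
  \sum_(x in swept j') wV x <= 3/4 * \sum_x wV x -> (j' <= j)%N.

Lemma sweep_separator p : simple_path (adjE e vert T) u p v ->
  balanced_separator (adjG e vert) wV (3/4) [set x in u :: p].
Proof.
case/and3P => pth /eqP lst _.
apply: (label_balanced_separator tree_closed tree_bridge sweep_label_parity
  sweep_cotree_change sweep_corner_change pth lst wV_ge0) => -[].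
  exact: le_trans (sweep_true_weight pth lst) j_light.
have W_ge0 : 0 <= \sum_x wV x by apply: sumr_ge0.
have [jk|jk] := eqVneq j k.
  by apply: le_trans (sweep_false_weight_full pth lst jk) _; lra.
have jlt : (j < k)%N by rewrite ltn_neqAle jk j_le_k.
have heavy : 3/4 * \sum_x wV x < \sum_(x in swept j.+1) wV x.
  by rewrite ltNge; apply/negP => /(j_max jlt); rewrite ltnn.
have branch : \sum_(x | (corner j \notin T) && av (fc (e (corner j))) (tf x)) wV x
    <= 1/4 * \sum_x wV x.
  case: (boolP (corner j \in T)) => zT; first by rewrite big_pred0 //; lra.
  rewrite (sum_wF (fun g => av (fc (e (corner j))) g)) -sum_wF_total.
  exact/ltW/(branch_weight_lt zT (fc_corner j)).
apply: le_trans (sweep_false_weight pth lst jlt) _.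
by rewrite sumr_predC; lra.
Qed.

End Sweep.

Lemma critical_node_separator : exists du dv, [/\ fc du = f, fc dv = f &
  forall p, simple_path (adjE e vert T) (vert du) p (vert dv) ->
    balanced_separator (adjG e vert) wV (3/4) [set x in vert du :: p]].
Proof.
pose light j := (j <= k)%N && (\sum_(x in swept j) wV x <= 3/4 * \sum_x wV x).
have light0 : light 0%N.
  rewrite /light swept0 leq0n; apply: mulr_ge0; first lra.
  by apply: sumr_ge0 => x _.
have ub j : light j -> (j <= k)%N by case/andP.
case: (ex_maxnP (ex_intro light _ light0) ub) => j /andP [jk jl] jmax.
exists z0, (corner j); split=> //; first exact: fc_corner.
move=> p; apply: (sweep_separator jk jl) => j' j'k j'l.
by apply: jmax; rewrite /light j'k j'l.
Qed.

End CriticalNode.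

End Cotree.

End PlanarMap.


Theorem lemma14 (D V F : finType) (e n : D -> D) (vert : D -> V) (fc : D -> F)
    (R : realFieldType) (wV : V -> R) (T : {set D}) (tf : V -> F) (rt : F) :
  is_planar_map e n vert fc ->
  biconnected_rel (adjG e vert) ->
  spanning_tree e vert T ->
  (forall x, 0 <= wV x) ->
  (forall x, wV x <= 12^-1 * \sum_y wV y) ->
  (* each vertex transfers its weight to a face containing it *)
  (forall x, exists d, vert d = x /\ fc d = tf x) ->
  let w := wF wV tf in
  (* (1) balanced node *)
  (forall f, balanced_node e fc T rt w (1/4) (3/4) f ->
     forall d, parent_dart e fc T rt f d ->
     forall p, simple_path (adjE e vert T) (vert d) p (vert (e d)) ->
       balanced_separator (adjG e vert) wV (3/4) [set x in vert d :: p])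
  /\
  (* (2) no balanced node *)
  ((~ exists f, balanced_node e fc T rt w (1/4) (3/4) f) ->
     exists f, critical_node e fc T rt w (1/4) (3/4) f /\
       exists du dv, [/\ fc du = f, fc dv = f &
         forall p, simple_path (adjE e vert T) (vert du) p (vert dv) ->
           balanced_separator (adjG e vert) wV (3/4) [set x in vert du :: p]]).
Proof.
move=> pm [G_connected _] T_tree wV_ge0 _ tf_face w; split.
  move=> f bal d d_parent p.
  exact: (balanced_node_separator pm T_tree G_connected wV_ge0 tf_face d_parent).
move=> no_balanced.
have [f f_critical] := critical_node_exists pm T_tree G_connected wV_ge0 no_balanced.
exists f; split=> //; have [z0 fc_z0] := fc_surj pm f.
exact: (critical_node_separator pm T_tree G_connected wV_ge0 tf_face f_critical fc_z0).
Qed.
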